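(* Let $I$ be (the matrix of) a te-interlace and let $p$ be a pivot of $I$. Then every nonzero entry of $I/\!\!/p$ has absolute value $2$, and in the $\{0,\pm1\}$-matrix $\tfrac12(I/\!\!/p)$ no two rows form a te-lace. In particular, the rows of $\tfrac12(I/\!\!/p)$ contain no te-interlace.
   Context: A set of vectors is identified with the matrix whose rows are these vectors. A matrix is totally equimodular if every set of linearly independent rows forms a matrix of full row rank whose nonzero maximal minors all have the same absolute value, and totally unimodular if all its square submatrices have determinant in $\{0,\pm1\}$. A linearly independent set of $\{0,\pm1\}$-vectors is a te-set if its matrix is totally equimodular, a tu-set if its matrix is totally unimodular, a te-lace if it is a te-set, not a tu-set, and all its proper subsets are tu-sets, and a te-interlace if it is a te-set, not a tu-set, and every pair of its vectors is a te-lace. A pivot is a position $p=(i,j)$ with nonzero entry; $I/p$ is obtained by dividing row $i$ by that entry and adding multiples of it to the other rows so that column $j$ becomes the $i$-th unit vector; the trim $I/\!\!/p$ is obtained from $I/p$ by deleting row $i$ and column $j$. *)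

(* Matrices over the rationals; a set of vectors is the
   matrix whose rows are these vectors. *)
From HB Require Import structures.
From mathcomp Require Import all_boot all_order all_algebra.
Set Implicit Arguments. Unset Strict Implicit. Unset Printing Implicit Defensive.
Import Order.TTheory GRing.Theory Num.Theory.
Local Open Scope ring_scope.

Definition is01 (m n : nat) (A : 'M[rat]_(m, n)) : Prop :=
  forall i j, A i j \in [:: 0; 1; -1].

(* the nonzero maximal minors of a k x n matrix all have the same absolute
   value (a column selection g : 'I_k -> 'I_n that is not injective gives a
   zero minor, and reordering columns only changes the sign) *)
Definition equal_abs_maxminors (k n : nat) (A : 'M[rat]_(k, n)) : Prop :=
  forall g1 g2 : 'I_k -> 'I_n,
    \det (colsub g1 A) != 0 -> \det (colsub g2 A) != 0 ->
    `|\det (colsub g1 A)| = `|\det (colsub g2 A)|.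

Definition totally_equimodular (m n : nat) (A : 'M[rat]_(m, n)) : Prop :=
  forall (k : nat) (f : 'I_k -> 'I_m), injective f ->
    row_free (rowsub f A) ->
    row_free (rowsub f A) /\ equal_abs_maxminors (rowsub f A).

Definition totally_unimodular (m n : nat) (A : 'M[rat]_(m, n)) : Prop :=
  forall (k : nat) (f : 'I_k -> 'I_m) (g : 'I_k -> 'I_n),
    \det (mxsub f g A) \in [:: 0; 1; -1].

Definition te_set (m n : nat) (A : 'M[rat]_(m, n)) : Prop :=
  is01 A /\ row_free A /\ totally_equimodular A.

Definition tu_set (m n : nat) (A : 'M[rat]_(m, n)) : Prop :=
  is01 A /\ row_free A /\ totally_unimodular A.

Definition te_lace (m n : nat) (A : 'M[rat]_(m, n)) : Prop :=
  te_set A /\ ~ tu_set A /\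
  forall (k : nat) (f : 'I_k -> 'I_m), injective f -> (k < m)%N ->
    tu_set (rowsub f A).

Definition two_rows (m n : nat) (A : 'M[rat]_(m, n)) (i j : 'I_m) : 'M[rat]_(2, n) :=
  rowsub (fun r : 'I_2 => if r == ord0 then i else j) A.

Definition te_interlace (m n : nat) (A : 'M[rat]_(m, n)) : Prop :=
  te_set A /\ ~ tu_set A /\
  forall i j : 'I_m, i != j -> te_lace (two_rows A i j).

(* I/p for p = (i,j): divide row i by I i j, and subtract multiples of it from
   the other rows so that column j becomes the i-th unit vector *)
Definition pivot_mx (m n : nat) (A : 'M[rat]_(m, n)) (i : 'I_m) (j : 'I_n)
  : 'M[rat]_(m, n) :=
  \matrix_(k, l) if k == i then A i l / A i j
                 else A k l - A k j * (A i l / A i j).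

Definition trim_mx (m n : nat) (A : 'M[rat]_(m.+1, n.+1)) (i : 'I_m.+1)
  (j : 'I_n.+1) : 'M[rat]_(m, n) :=
  row' i (col' j (pivot_mx A i j)).

From mathcomp Require Import all_boot all_order all_algebra.
From mathcomp Require Import perm ring.
From Stdlib Require Import Classical.
Import Order.TTheory GRing.Theory Num.Theory.
Local Open Scope ring_scope.

(* Write p = (i, j) and let a <> i be a row, c <> j a column of I.  The (a, c)
   entry of I//p is det(I[{i,a},{j,c}]) / I_ij with I_ij = +-1.  Rows i and a
   form a te-lace, which is not totally unimodular, so some 2 x 2 minor on these
   rows is +-2 (the only values besides 0, +-1 of a 2 x 2 minor of a
   {0,+-1}-matrix), and equimodularity forces every nonzero one to be +-2.
   Hence every nonzero entry of (1/2)(I//p) equals -I_aj I_ic / I_ij: the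
   support of (1/2)(I//p) carries a rank-one matrix, so its 2 x 2 minors lie in
   {0,+-1}, and no two of its rows can form a te-lace.  A te-interlace with two
   or more rows contains such a pair, and one with at most one row is a tu-set. *)

Definition in01 (x : rat) : bool := x \in [:: 0; 1; -1].

Lemma in01_signr (b : bool) x : in01 ((-1) ^+ b * x) = in01 x.
Proof.
case: b; rewrite ?expr0 ?mul1r // expr1 mulN1r /in01 !inE.
by rewrite oppr_eq0 eqr_oppLR [- x == _]eqr_oppLR opprK (orbC (x == -1)).
Qed.

Lemma norm_in01 x : in01 x -> x != 0 -> `|x| = 1.
Proof. by rewrite /in01 !inE => /or3P[] /eqP ->. Qed.

Lemma minor2_notin01 (p q r u : rat) : in01 p -> in01 q -> in01 r -> in01 u ->
  ~~ in01 (p * q - r * u) -> `|p * q - r * u| = 2.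
Proof. by rewrite /in01 !inE; do 4 (case/or3P => /eqP ->); vm_compute. Qed.

Lemma minor2_in01 (p q r u : rat) : in01 p -> in01 q -> in01 r -> in01 u ->
  (p != 0 -> q != 0 -> r != 0 -> u != 0 -> p * q = r * u) ->
  in01 (p * q - r * u).
Proof.
rewrite /in01 !inE; do 4 (case/or3P => /eqP ->); vm_compute => // h.
all: by have := h isT isT isT isT.
Qed.

Lemma half_diff_in01E (e x y s : rat) :
  in01 e -> in01 x -> in01 y -> in01 s -> s != 0 ->
  in01 (2^-1 * (e - x * (y / s))) -> 2^-1 * (e - x * (y / s)) != 0 ->
  2^-1 * (e - x * (y / s)) = - (x * y / s).
Proof. by rewrite /in01 !inE; do 4 (case/or3P => /eqP ->); vm_compute. Qed.

Section Determinants.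

Variable R : comNzRingType.

Lemma det_mx2 (A : 'M[R]_2) : \det A = A 0 0 * A 1 1 - A 0 1 * A 1 0.
Proof.
rewrite (expand_det_row _ ord0) !big_ord_recl big_ord0 /cofactor !det_mx11 !mxE /=.
rewrite addr0 expr0 expr1 !mul1r.
have -> : lift ord0 0 = 1 :> 'I_2 by apply/val_inj.
have -> : lift 1 0 = 0 :> 'I_2 by apply/val_inj.
by rewrite mulN1r mulrN.
Qed.

Lemma det_mxsub_noninj k m n (f : 'I_k -> 'I_m) (g : 'I_k -> 'I_n) (A : 'M[R]_(m, n)) :
  ~~ injectiveb f -> \det (mxsub f g A) = 0.
Proof.
case/injectivePn => i1 [i2 ne12 e12].
by apply: (determinant_alternate ne12) => l; rewrite !mxE e12.
Qed.

Lemma det_rowsub_inj k (f : 'I_k -> 'I_k) (A : 'M[R]_k) (f_inj : injective f) :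
  \det (rowsub f A) = (-1) ^+ perm f_inj * \det A.
Proof.
have -> : rowsub f A = row_perm (perm f_inj) A.
  by apply/matrixP => r c; rewrite row_permEsub !mxE permE.
by rewrite row_permE det_mulmx det_perm.
Qed.

End Determinants.

Lemma tu_injective_rows m n (A : 'M[rat]_(m, n)) :
  (forall k (f : 'I_k -> 'I_m) (g : 'I_k -> 'I_n), injective f ->
     in01 (\det (mxsub f g A))) ->
  totally_unimodular A.
Proof.
move=> hA k f g; have [/injectiveP f_inj | f_noninj] := boolP (injectiveb f).
  exact: hA.
by rewrite det_mxsub_noninj // !inE eqxx.
Qed.

Lemma tu_rows_le1 m n (A : 'M[rat]_(m, n)) :
  (m <= 1)%N -> is01 A -> totally_unimodular A.
Proof.
move=> m_le1 A01; apply: tu_injective_rows => k f g f_inj.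
have := leq_trans (leq_card f f_inj); rewrite !card_ord => /(_ _ m_le1).
case: k f g f_inj => [|[|//]] f g _ _; first by rewrite det_mx00 /in01 !inE eqxx.
by rewrite det_mx11 mxE; apply: A01.
Qed.

Lemma tu_two_rows n (N : 'M[rat]_(2, n)) : is01 N ->
  (forall g : 'I_2 -> 'I_n, in01 (\det (colsub g N))) -> totally_unimodular N.
Proof.
move=> N01 hN; apply: tu_injective_rows => k f g f_inj.
have := leq_card f f_inj; rewrite !card_ord.
case: k f g f_inj => [|[|[|//]]] f g f_inj _.
- by rewrite det_mx00 /in01 !inE eqxx.
- by rewrite det_mx11 mxE; apply: N01.
- by rewrite mxsubrc det_rowsub_inj in01_signr.
Qed.

Section TeLace.

Variables (n : nat) (P : 'M[rat]_(2, n)).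
Hypotheses (P_te : te_set P) (P_ntu : ~ tu_set P).

Lemma not_tu_minor2 : exists g : 'I_2 -> 'I_n, `|\det (colsub g P)| = 2.
Proof.
have [P01 [P_free _]] := P_te.
have [g /negP bad] : exists g : 'I_2 -> 'I_n, ~ in01 (\det (colsub g P)).
  apply: not_all_ex_not => all01; apply: P_ntu; split=> //; split=> //.
  exact: tu_two_rows.
exists g; move: bad; rewrite det_mx2.
by apply: minor2_notin01; rewrite mxE; apply: P01.
Qed.

Lemma te_not_tu_minor2 (g : 'I_2 -> 'I_n) :
  \det (colsub g P) != 0 -> `|\det (colsub g P)| = 2.
Proof.
have [_ [P_free P_te']] := P_te; have [g0 g0_2] := not_tu_minor2.
have P_id : rowsub id P = P by exact: mxsub_id.
move: (P_te' 2 id (@inj_id _)); rewrite P_id => /(_ P_free) [_ equimod] nz.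
rewrite -g0_2; apply: equimod => //.
by rewrite -normr_eq0 g0_2.
Qed.

End TeLace.

Definition sel2 {T : Type} (a b : T) : 'I_2 -> T :=
  fun r => if r == ord0 then a else b.

Lemma two_rows_rowsub m m' n (A : 'M[rat]_(m, n)) (f : 'I_m' -> 'I_m) a b :
  two_rows (rowsub f A) a b = two_rows A (f a) (f b).
Proof. by apply/matrixP => r c; rewrite !mxE; case: (r == ord0). Qed.

Lemma te_interlace_has_lace m n (A : 'M[rat]_(m, n)) :
  te_interlace A -> exists a b, a != b /\ te_lace (two_rows A a b).
Proof.
case: m A => [|[|m]] A [[A01 [A_free _]] [A_ntu laces]].
1,2: by case: A_ntu; split=> //; split=> //; apply: tu_rows_le1.
by exists ord0, (lift ord0 ord0); split=> //; apply: laces.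
Qed.

Section Trim.

Variables (m n : nat) (I : 'M[rat]_(m.+1, n.+1)) (i : 'I_m.+1) (j : 'I_n.+1).
Hypothesis pivot_nz : I i j != 0.

Lemma trim_mxE k l :
  trim_mx I i j k l = I (lift i k) (lift j l) - I (lift i k) j * (I i (lift j l) / I i j).
Proof. by rewrite !mxE eq_sym (negbTE (neq_lift i k)). Qed.

Lemma trim_mx_minor k l :
  trim_mx I i j k l = \det (colsub (sel2 j (lift j l)) (two_rows I i (lift i k))) / I i j.
Proof. by rewrite trim_mxE det_mx2 !mxE /=; field. Qed.

Lemma trim_mx_te_interlace k l : te_interlace I ->
  trim_mx I i j k l != 0 -> `|trim_mx I i j k l| = 2.
Proof.
move=> [[I01 _] [_ laces]]; have [P_te [P_ntu _]] := laces i _ (neq_lift i k).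
rewrite trim_mx_minor mulf_eq0 negb_or => /andP[minor_nz _].
by rewrite normrM normfV (norm_in01 _ (I01 i j) pivot_nz) invr1 mulr1 te_not_tu_minor2.
Qed.

Local Notation H := (2^-1 *: trim_mx I i j).

Hypothesis I01 : is01 I.

Lemma half_trim_mx_rank1 k l : in01 (H k l) -> H k l != 0 ->
  H k l = - (I (lift i k) j * I i (lift j l) / I i j).
Proof. by rewrite [H k l]mxE trim_mxE; apply: half_diff_in01E => //; apply: I01. Qed.

Lemma half_trim_mx_minor2 k1 k2 l1 l2 :
  in01 (H k1 l1) -> in01 (H k1 l2) -> in01 (H k2 l1) -> in01 (H k2 l2) ->
  in01 (H k1 l1 * H k2 l2 - H k1 l2 * H k2 l1).
Proof.
move=> h11 h12 h21 h22; apply: minor2_in01 => // nz11 nz22 nz12 nz21.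
by rewrite (half_trim_mx_rank1 _ _ h11 nz11) (half_trim_mx_rank1 _ _ h12 nz12)
  (half_trim_mx_rank1 _ _ h21 nz21) (half_trim_mx_rank1 _ _ h22 nz22); field.
Qed.

Lemma half_trim_mx_two_rows_tu k1 k2 :
  is01 (two_rows H k1 k2) -> totally_unimodular (two_rows H k1 k2).
Proof.
move=> N01; apply: tu_two_rows => // g.
have NE r c : colsub g (two_rows H k1 k2) r c = H (sel2 k1 k2 r) (g c).
  by rewrite [LHS]mxE [LHS]mxE.
have N01' r c : in01 (H (sel2 k1 k2 r) c).
  by move: (N01 r c); rewrite [two_rows _ _ _ _ _]mxE.
by rewrite det_mx2 !NE; apply: half_trim_mx_minor2; apply: N01'.
Qed.

End Trim.

Theorem mainTheorem7 (m n : nat) (I : 'M[rat]_(m.+1, n.+1))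
  (i : 'I_m.+1) (j : 'I_n.+1) :
  te_interlace I -> I i j != 0 ->
  [/\ (forall k l, trim_mx I i j k l != 0 -> `|trim_mx I i j k l| = 2),
      (forall k1 k2 : 'I_m, k1 != k2 ->
         ~ te_lace (two_rows (2^-1 *: trim_mx I i j) k1 k2))
    & (forall (k : nat) (f : 'I_k -> 'I_m), injective f ->
         ~ te_interlace (rowsub f (2^-1 *: trim_mx I i j)))].
Proof.
move=> I_ti pivot_nz; have [[I01 _] _] := I_ti.
have no_lace (k1 k2 : 'I_m) : ~ te_lace (two_rows (2^-1 *: trim_mx I i j) k1 k2).
  move=> [[N01 [N_free _]] [N_ntu _]]; apply: N_ntu; split=> //; split=> //.
  exact: half_trim_mx_two_rows_tu.
split=> [k l | k1 k2 _ | k f f_inj /te_interlace_has_lace [a [b [_]]]].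
- exact: trim_mx_te_interlace.
- exact: no_lace.
- by rewrite two_rows_rowsub; apply: no_lace.
Qed.
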